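(* Let $0\le\epsilon<1$ and let $\rho^{AB}$ be a quantum state on a finite-dimensional bipartite system $AB$ with marginals $\rho^A,\rho^B$. Then $$I^\epsilon_H(A:B)_\rho\ \le\ 2\log_2\min\{|A|,|B|\}+3\log_2\frac{1}{1-\epsilon}+6\log_2 3-4,$$ where $|A|,|B|$ are the dimensions of the systems.
   Context: For quantum states $\alpha,\beta$ on the same finite-dimensional Hilbert space and $0\le\epsilon<1$, $D^\epsilon_H(\alpha\|\beta):=\max_\Pi -\log_2\operatorname{Tr}[\Pi\beta]$, the maximum over POVM elements $0\le\Pi\le\mathbb{1}$ with $\operatorname{Tr}[\Pi\alpha]\ge 1-\epsilon$. The hypothesis testing mutual information is $I^\epsilon_H(A:B)_\rho:=D^\epsilon_H(\rho^{AB}\|\rho^A\otimes\rho^B)$. *)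

From Stdlib Require Import Reals List.
Import ListNotations.
Open Scope R_scope.

Record C := mkC { re : R; im : R }.
Definition C0 : C := mkC 0 0.
Definition Cadd (x y : C) : C := mkC (re x + re y) (im x + im y).
Definition Cmul (x y : C) : C :=
  mkC (re x * re y - im x * im y) (re x * im y + im x * re y).
Definition Cconj (x : C) : C := mkC (re x) (- im x).

Definition csum (n : nat) (f : nat -> C) : C :=
  fold_right Cadd C0 (map f (seq 0 n)).

(** Operators on a d-dimensional system: entries M i j for i, j < d
    (entries outside this range are irrelevant). *)
Definition op := nat -> nat -> C.
(** Operators on the bipartite system AB = A (x) B, indexed by
    X a b a' b' = <a b| X |a' b'>. *)
Definition op2 := nat -> nat -> nat -> nat -> C.

(** Positive semidefiniteness: v^* X v is real and nonnegative for all v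
    (over C this is the usual definition and implies hermiticity). *)
Definition qform2 (dA dB : nat) (X : op2) (v : nat -> nat -> C) : C :=
  csum dA (fun a => csum dB (fun b => csum dA (fun a' => csum dB (fun b' =>
    Cmul (Cconj (v a b)) (Cmul (X a b a' b') (v a' b')))))).
Definition psd2 (dA dB : nat) (X : op2) : Prop :=
  forall v, im (qform2 dA dB X v) = 0 /\ 0 <= re (qform2 dA dB X v).

Definition id2 : op2 := fun a b a' b' =>
  if andb (Nat.eqb a a') (Nat.eqb b b') then mkC 1 0 else C0.
Definition sub2 (X Y : op2) : op2 := fun a b a' b' =>
  Cadd (X a b a' b') (mkC (- re (Y a b a' b')) (- im (Y a b a' b'))).

Definition tr2 (dA dB : nat) (X : op2) : C :=
  csum dA (fun a => csum dB (fun b => X a b a b)).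

Definition is_state2 (dA dB : nat) (rho : op2) : Prop :=
  psd2 dA dB rho /\ tr2 dA dB rho = mkC 1 0.

Definition povm_elem2 (dA dB : nat) (Pi : op2) : Prop :=
  psd2 dA dB Pi /\ psd2 dA dB (sub2 id2 Pi).

Definition trmul2 (dA dB : nat) (X Y : op2) : C :=
  csum dA (fun a => csum dB (fun b => csum dA (fun a' => csum dB (fun b' =>
    Cmul (X a b a' b') (Y a' b' a b))))).

Definition margA (dA dB : nat) (rho : op2) : op :=
  fun a a' => csum dB (fun b => rho a b a' b).
Definition margB (dA dB : nat) (rho : op2) : op :=
  fun b b' => csum dA (fun a => rho a b a b').
Definition tensor (X Y : op) : op2 := fun a b a' b' => Cmul (X a a') (Y b b').

Definition log2 (x : R) : R := ln x / ln 2.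

(** "D^eps_H(alpha || beta) <= c", where
      D^eps_H(alpha||beta) = max_{Pi : 0<=Pi<=1, Tr[Pi alpha] >= 1-eps} -log2 Tr[Pi beta]
    (value +infinity when Tr[Pi beta] = 0 for a feasible Pi).
    A maximum is <= c iff every candidate value is <= c; a value +infinity
    is never <= c, hence the requirement 0 < Tr[Pi beta].
    Traces Tr[Pi alpha], Tr[Pi beta] of products of PSD operators are real;
    we take their real parts. *)
Definition DH_le (dA dB : nat) (eps : R) (alpha beta : op2) (c : R) : Prop :=
  forall Pi : op2, povm_elem2 dA dB Pi ->
    1 - eps <= re (trmul2 dA dB Pi alpha) ->
    0 < re (trmul2 dA dB Pi beta) /\ - log2 (re (trmul2 dA dB Pi beta)) <= c.

Definition IH_le (dA dB : nat) (eps : R) (rho : op2) (c : R) : Prop :=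
  DH_le dA dB eps rho (tensor (margA dA dB rho) (margB dA dB rho)) c.

(* It suffices to show Tr[Pi (rho_A (x) rho_B)] >= (1-eps)^2 / (16 d^2) for every
   POVM element Pi with Tr[Pi rho] >= 1-eps, where d = min(|A|,|B|); taking -log2
   gives the claim since 2^8 <= 3^6.  Swapping A and B we may take d = |A|, and
   conjugating by a unitary on A we may assume rho_A = sum_a l_a |a><a|.  Put
   E_a = |a><a| (x) 1 and G(X, Y) = Tr[Pi X rho Y^*], a positive semidefinite
   sesquilinear form.  Split the identity into P, the sum of the E_a with
   l_a >= t = (1-eps)/4d, and its complement Q.  As Pi <= 1, G(Q,Q) <= Tr[Q rho] <= d t,
   so the parallelogram law G(P+Q,P+Q) <= 2 G(P,P) + 2 G(Q,Q) yields
   G(P,P) >= (1-eps)/4, and pinching G(P,P) <= d sum G(E_a,E_a) spreads this over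
   the large eigenvalues.  Finally Tr[Pi (|a><a| (x) rho_B)] >= G(E_a,E_a), whence
   Tr[Pi (rho_A (x) rho_B)] >= t * sum_(l_a >= t) G(E_a,E_a) >= (1-eps)^2/(16 d^2). *)

From Pilot Require Import Defs.
From Stdlib Require Import Reals Lra.
From HB Require Import structures.
From mathcomp Require Import all_boot all_order all_algebra.
From mathcomp Require Import sesquilinear spectral mxtens complex Rstruct ring.

Set Implicit Arguments.
Unset Strict Implicit.
Unset Printing Implicit Defensive.

Import Order.TTheory GRing.Theory Num.Theory.
Local Open Scope ring_scope.
Local Open Scope sesquilinear_scope.

Section PositiveSemidefinite.
Variable K : numClosedFieldType.

Lemma trmxCE p q (X : 'M[K]_(p, q)) i j : (X ^t*) i j = (X j i)^*.
Proof. by rewrite !mxE. Qed.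

Definition sesq n (X : 'M[K]_n) (u v : 'rV[K]_n) := (u *m X *m v ^t*) 0 0.

Definition psdmx n (X : 'M[K]_n) := forall v : 'rV[K]_n, 0 <= sesq X v v.

Lemma sesqE n (X : 'M[K]_n) u v : sesq X u v = \sum_i \sum_j u 0 i * X i j * (v 0 j)^*.
Proof.
rewrite /sesq mxE; under eq_bigr => j _ do rewrite !mxE big_distrl /=.
by rewrite exchange_big.
Qed.

Lemma sesqDl n (X : 'M[K]_n) u u' v : sesq X (u + u') v = sesq X u v + sesq X u' v.
Proof. by rewrite /sesq !mulmxDl mxE. Qed.

Lemma sesqDr n (X : 'M[K]_n) u v v' : sesq X u (v + v') = sesq X u v + sesq X u v'.
Proof. by rewrite /sesq linearD map_mxD mulmxDr mxE. Qed.

Lemma sesqZl n (X : 'M[K]_n) c u v : sesq X (c *: u) v = c * sesq X u v.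
Proof. by rewrite /sesq -!scalemxAl mxE. Qed.

Lemma sesqZr n (X : 'M[K]_n) c u v : sesq X u (c *: v) = c^* * sesq X u v.
Proof. by rewrite /sesq linearZ map_mxZ -scalemxAr mxE. Qed.

Lemma sesq_delta n (X : 'M[K]_n) i j : sesq X (delta_mx 0 i) (delta_mx 0 j) = X i j.
Proof.
rewrite sesqE (bigD1 i) //= addrC big1 ?add0r => [|k ki]; last first.
  by rewrite big1 // => l _; rewrite mxE (negbTE ki) andbF /= !mul0r.
rewrite (bigD1 j) //= addrC big1 ?add0r => [|k kj]; last first.
  by rewrite !mxE (negbTE kj) andbF /= conjC0 mulr0.
by rewrite !mxE !eqxx /= conjC1 mulr1 mul1r.
Qed.

Lemma psdmx_diag n (X : 'M[K]_n) i : psdmx X -> 0 <= X i i.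
Proof. by move=> hX; rewrite -sesq_delta; apply: hX. Qed.

Lemma psdmx_congr m n (X : 'M[K]_n) (W : 'M[K]_(m, n)) :
  psdmx X -> psdmx (W *m X *m W ^t*).
Proof. by move=> hX v; have := hX (v *m W); rewrite /sesq trmx_mul map_mxM !mulmxA. Qed.

Lemma psdmx_sum n (I : finType) (P : pred I) (F : I -> 'M[K]_n) :
  (forall i, P i -> psdmx (F i)) -> psdmx (\sum_(i | P i) F i).
Proof.
move=> hF; elim/big_rec: _ => [|i X Pi hX] v; rewrite /sesq.
  by rewrite mulmx0 mul0mx mxE.
by rewrite mulmxDr mulmxDl mxE addr_ge0 ?hF ?hX.
Qed.

(* Polarization: the reality of the quadratic form at [e_i + e_j] and
   [e_i + 'i e_j] forces [X i j] and [X j i] to be conjugate. *)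
Lemma psdmx_herm_entry n (X : 'M[K]_n) i j : psdmx X -> (X j i)^* = X i j.
Proof.
move=> hX; pose ei : 'rV[K]_n := delta_mx 0 i; pose ej : 'rV[K]_n := delta_mx 0 j.
have realX u : sesq X u u \is Num.real by apply: ger0_real; apply: hX.
have rii := realX ei; have rjj := realX ej.
have h1 := realX (ei + ej); have h2 := realX (ei + 'i *: ej).
rewrite !sesqDl !sesqDr !sesqZl !sesqZr !sesq_delta in rii rjj h1 h2.
move/conj_Creal: h1; move/conj_Creal: h2.
rewrite !rmorphD !rmorphM /= conjCK conjCi (conj_Creal rii) (conj_Creal rjj).
set x := X i j; set y := X j i => h2 h1.
have ii : 'i * 'i = -1 :> K by rewrite -expr2 sqrCi.
apply/eqP; rewrite -subr_eq0; apply/eqP.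
set d1 := X i i + x^* + (y^* + X j j) - (X i i + x + (y + X j j)).
set d2 := X i i + 'i * x^* + (- 'i * y^* + - 'i * ('i * X j j)) -
    (X i i + - 'i * x + ('i * y + 'i * (- 'i * X j j))).
have -> : y^* - x = (d1 + 'i * d2) / 2 - ('i * 'i + 1) * (x^* - y^* + x - y) / 2.
  by rewrite /d1 /d2; field.
by rewrite /d1 /d2 h1 h2 !subrr ii addNr !mul0r mulr0 add0r subr0 mul0r.
Qed.

Lemma psdmx_hermsym n (X : 'M[K]_n) : psdmx X -> X \is hermsymmx.
Proof.
move=> hX; apply/is_hermitianmxP; rewrite expr0 scale1r.
by apply/matrixP => i j; rewrite !mxE psdmx_herm_entry.
Qed.

Lemma psdmx_spectral n (X : 'M[K]_n) : psdmx X ->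
  exists (P : 'M[K]_n) (d : 'rV[K]_n),
    [/\ P *m P ^t* = 1%:M, P ^t* *m P = 1%:M, X = P ^t* *m diag_mx d *m P &
        forall i, 0 <= d 0 i].
Proof.
move=> hX.
have /orthomx_spectralP hd := hermitian_normalmx (psdmx_hermsym hX).
set P := spectralmx X in hd; set d := spectral_diag X in hd.
have Pu : P \is unitarymx by apply: spectral_unitarymx.
have hPP : P *m P ^t* = 1%:M by apply/unitarymxP.
have hPP' : P ^t* *m P = 1%:M by rewrite -(invmx_unitary Pu) mulVmx ?unitarymx_unit.
rewrite (invmx_unitary Pu) in hd.
exists P, d; split => // i.
have hD : diag_mx d = P *m X *m P ^t*.
  by rewrite hd !mulmxA hPP mul1mx -mulmxA hPP mulmx1.
by have := psdmx_diag i (psdmx_congr P hX); rewrite -hD mxE eqxx mulr1n.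
Qed.

Lemma mxtrace_psdmx_mul_ge0 n (X Y : 'M[K]_n) : psdmx X -> psdmx Y -> 0 <= \tr (X *m Y).
Proof.
move=> hX hY; have [P [d [_ _ -> hd]]] := psdmx_spectral hY.
rewrite !mulmxA mxtrace_mulC !mulmxA mul_mx_diag.
apply: sumr_ge0 => i _; rewrite mxE mulr_ge0 //.
exact: psdmx_diag i (psdmx_congr P hX).
Qed.

Lemma mxtrace_isometry_conj p q (W : 'M[K]_(p, q)) (A B : 'M[K]_q) : W^t* *m W = 1%:M ->
  \tr (W *m A *m W^t* *m (W *m B *m W^t*)) = \tr (A *m B).
Proof.
move=> hW; rewrite !mulmxA -[W *m A *m W^t* *m W]mulmxA hW mulmx1.
by rewrite mxtrace_mulC !mulmxA hW mul1mx.
Qed.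

End PositiveSemidefinite.

Section PinchedForm.
Variables (K : numClosedFieldType) (n : nat) (Pi rho : 'M[K]_n).

Definition pform (A B : 'M[K]_n) := \tr (Pi *m (A *m rho *m B ^t*)).

Lemma pformDl A A' B : pform (A + A') B = pform A B + pform A' B.
Proof. by rewrite /pform !mulmxDl mulmxDr mxtraceD. Qed.

Lemma pformDr A B B' : pform A (B + B') = pform A B + pform A B'.
Proof. by rewrite /pform linearD map_mxD mulmxDr mulmxDr mxtraceD. Qed.

Lemma pformNl A B : pform (- A) B = - pform A B.
Proof. by rewrite /pform !mulNmx mulmxN linearN. Qed.

Lemma pformNr A B : pform A (- B) = - pform A B.
Proof. by rewrite /pform linearN map_mxN !mulmxN linearN. Qed.

Lemma pform_suml (I : finType) (S : pred I) (F : I -> 'M[K]_n) B :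
  pform (\sum_(i | S i) F i) B = \sum_(i | S i) pform (F i) B.
Proof.
elim/big_rec2: _ => [|i x y _ IH]; last by rewrite pformDl IH.
by rewrite /pform !mul0mx mulmx0 linear0.
Qed.

Lemma pform_sumr (I : finType) (S : pred I) (F : I -> 'M[K]_n) A :
  pform A (\sum_(i | S i) F i) = \sum_(i | S i) pform A (F i).
Proof.
elim/big_rec2: _ => [|i x y _ IH]; last by rewrite pformDr IH.
by rewrite /pform linear0 map_mx0 !mulmx0 linear0.
Qed.

Hypotheses (psdPi : psdmx Pi) (psdrho : psdmx rho).

Lemma pform_ge0 A : 0 <= pform A A.
Proof. by apply: mxtrace_psdmx_mul_ge0 => //; apply: psdmx_congr. Qed.

(* Expanding [0 <= sum_(i, j) pform (E i - E j) (E i - E j)]. *)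
Lemma pform_pinching (I : finType) (S : pred I) (E : I -> 'M[K]_n) :
  pform (\sum_(i | S i) E i) (\sum_(i | S i) E i) <=
  #|S|%:R * \sum_(i | S i) pform (E i) (E i).
Proof.
set k := #|S|%:R; set T := \sum_(i | S i) pform (E i) (E i).
set M := pform (\sum_(i | S i) E i) (\sum_(i | S i) E i).
have diffs_ge0 : 0 <= \sum_(i | S i) \sum_(j | S j) pform (E i - E j) (E i - E j).
  by apply: sumr_ge0 => i _; apply: sumr_ge0 => j _; apply: pform_ge0.
have M_double : M = \sum_(i | S i) \sum_(j | S j) pform (E i) (E j).
  by rewrite /M pform_suml; apply: eq_bigr => i _; rewrite pform_sumr.
have diag_sum : \sum_(i | S i) \sum_(j | S j) pform (E i) (E i) = k * T.
  by under eq_bigr => i _ do rewrite sumr_const; rewrite sumrMnl -mulr_natl.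
have diffsE : \sum_(i | S i) \sum_(j | S j) pform (E i - E j) (E i - E j) =
    2 * (k * T - M).
  under eq_bigr => i _ do under eq_bigr => j _ do
    rewrite pformDl !pformDr !pformNl !pformNr opprK.
  under eq_bigr => i _ do rewrite !big_split /=.
  have diag_sum' : \sum_(i | S i) \sum_(j | S j) pform (E j) (E j) = k * T.
    by rewrite exchange_big.
  have cross : \sum_(i | S i) \sum_(j | S j) - pform (E i) (E j) = - M.
    by rewrite M_double -sumrN; apply: eq_bigr => i _; rewrite sumrN.
  have cross' : \sum_(i | S i) \sum_(j | S j) - pform (E j) (E i) = - M.
    by rewrite exchange_big.
  by rewrite !big_split /= diag_sum diag_sum' cross cross'; ring.
by rewrite diffsE pmulr_rge0 ?subr_ge0 in diffs_ge0.
Qed.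

Lemma pform_parallelogram A B : pform (A + B) (A + B) <= 2 * (pform A A + pform B B).
Proof.
by have := pform_pinching xpredT (fun i : bool => if i then A else B); rewrite !big_bool card_bool.
Qed.

End PinchedForm.

Section TensorIndices.
Variables (K : numClosedFieldType) (n m : nat).
Local Notation idx a b := (@mxtens_index n m (a, b)).

Lemma big_mxtens_index (F : 'I_(n * m) -> K) : \sum_k F k = \sum_a \sum_b F (idx a b).
Proof.
rewrite pair_bigA /= (reindex (@mxtens_index n m)) /=; last first.
  by exists (@mxtens_unindex n m) => x _; [apply: mxtens_indexK | apply: mxtens_unindexK].
by apply: eq_bigr => -[a b].
Qed.

Lemma mxtens_matrixP (X Y : 'M[K]_(n * m)) :
  (forall a b a' b', X (idx a b) (idx a' b') = Y (idx a b) (idx a' b')) -> X = Y.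
Proof.
move=> XY; apply/matrixP => k l.
by case: (mxtens_indexP k) => a b; case: (mxtens_indexP l) => a' b'; apply: XY.
Qed.

Lemma mxtens_index_eq a b a' b' : (idx a b == idx a' b') = (a == a') && (b == b').
Proof. by rewrite (inj_eq (can_inj (@mxtens_indexK n m))). Qed.

Lemma mulmx_mxtensE (X Y : 'M[K]_(n * m)) i j :
  (X *m Y) i j = \sum_c \sum_d X i (idx c d) * Y (idx c d) j.
Proof. by rewrite mxE big_mxtens_index. Qed.

Lemma mxtrace_mxtensE (X : 'M[K]_(n * m)) : \tr X = \sum_a \sum_b X (idx a b) (idx a b).
Proof. by rewrite /mxtrace big_mxtens_index. Qed.

Lemma trmxC_tens (A : 'M[K]_n) (B : 'M[K]_m) : (A *t B)^t* = A^t* *t B^t*.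
Proof. by rewrite trmx_tens map_mxT. Qed.

Lemma tens1mx : (1%:M : 'M[K]_n) *t (1%:M : 'M[K]_m) = 1%:M.
Proof.
apply: mxtens_matrixP => a b a' b'.
by rewrite tensmxE !mxE mxtens_index_eq -natrM mulnb.
Qed.

End TensorIndices.

Lemma sum_natr_eq_mull (K : pzRingType) k (b : 'I_k) (F : 'I_k -> K) :
  \sum_j (j == b)%:R * F j = F b.
Proof.
under eq_bigr => j _ do rewrite mulr_natl mulrb.
by rewrite -big_mkcond big_pred1_eq.
Qed.

Lemma sum_natr_eq_mulr (K : comPzRingType) k (b : 'I_k) (F : 'I_k -> K) :
  \sum_j F j * (j == b)%:R = F b.
Proof. by under eq_bigr => j _ do rewrite mulrC; rewrite sum_natr_eq_mull. Qed.

Section Marginals.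
Variables (K : numClosedFieldType) (n m : nat).
Local Notation idx a b := (@mxtens_index n m (a, b)).

Definition mxmargA (X : 'M[K]_(n * m)) : 'M[K]_n :=
  \matrix_(a, a') \sum_b X (idx a b) (idx a' b).
Definition mxmargB (X : 'M[K]_(n * m)) : 'M[K]_m :=
  \matrix_(b, b') \sum_a X (idx a b) (idx a b').

Definition deltaI (a c : 'I_n) : 'M[K]_(n * m) := delta_mx a c *t 1%:M.

Lemma deltaIE a c x y z w :
  deltaI a c (idx x y) (idx z w) = ((x == a) && (z == c))%:R * (y == w)%:R.
Proof. by rewrite tensmxE !mxE. Qed.

Lemma mul_deltaI_mx a c (X : 'M[K]_(n * m)) x y j :
  (deltaI a c *m X) (idx x y) j = (x == a)%:R * X (idx c y) j.
Proof.
rewrite mulmx_mxtensE (bigD1 c) //= addrC big1 ?add0r => [|z zc]; last first.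
  by rewrite big1 // => w _; rewrite deltaIE (negbTE zc) andbF !mul0r.
rewrite (bigD1 y) //= addrC big1 ?add0r => [|w wy]; last first.
  by rewrite deltaIE [y == w]eq_sym (negbTE wy) mulr0 mul0r.
by rewrite deltaIE !eqxx andbT mulr1.
Qed.

Lemma mul_mx_deltaI_tC a c (X : 'M[K]_(n * m)) x' y' i :
  (X *m (deltaI a c)^t*) i (idx x' y') = (x' == a)%:R * X i (idx c y').
Proof.
rewrite mulmx_mxtensE (bigD1 c) //= addrC big1 ?add0r => [|z zc]; last first.
  by rewrite big1 // => w _; rewrite trmxCE deltaIE (negbTE zc) andbF !mul0r conjC0 mulr0.
rewrite (bigD1 y') //= addrC big1 ?add0r => [|w wy]; last first.
  by rewrite trmxCE deltaIE [y' == w]eq_sym (negbTE wy) mulr0 conjC0 mulr0.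
by rewrite trmxCE deltaIE !eqxx andbT mulr1 conjC_nat mulrC.
Qed.

Lemma deltaI_conjE a c a' c' (X : 'M[K]_(n * m)) x y x' y' :
  (deltaI a c *m X *m (deltaI a' c')^t*) (idx x y) (idx x' y') =
  (x == a)%:R * (x' == a')%:R * X (idx c y) (idx c' y').
Proof. by rewrite mul_mx_deltaI_tC mul_deltaI_mx mulrCA mulrA. Qed.

Lemma sum_deltaI_conj a (X : 'M[K]_(n * m)) :
  \sum_c deltaI a c *m X *m (deltaI a c)^t* = delta_mx a a *t mxmargB X.
Proof.
apply: mxtens_matrixP => x y x' y'; rewrite summxE tensmxE !mxE.
under eq_bigr => c _ do rewrite deltaI_conjE.
by rewrite -big_distrr /= -natrM mulnb.
Qed.

Lemma sum_deltaI : \sum_a deltaI a a = 1%:M.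
Proof.
apply: mxtens_matrixP => x y x' y'; rewrite summxE !mxE mxtens_index_eq.
under eq_bigr => a _ do rewrite deltaIE -mulnb natrM.
rewrite -big_distrl /= -mulnb natrM; congr (_ * _).
under eq_bigr => a _ do rewrite eq_sym.
by rewrite sum_natr_eq_mull eq_sym.
Qed.

Lemma mxtrace_deltaI_conj a a' (X : 'M[K]_(n * m)) :
  \tr (deltaI a a *m X *m (deltaI a' a')^t*) = (a == a')%:R * mxmargA X a a.
Proof.
rewrite mxtrace_mxtensE mxE.
under eq_bigr => x _ do under eq_bigr => y _ do rewrite deltaI_conjE.
under eq_bigr => x _ do rewrite -big_distrr /= -mulrA.
rewrite sum_natr_eq_mull; have [<-|] := eqVneq a a'; first by rewrite mul1r.
by rewrite !mul0r.
Qed.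

Lemma tens_diag_mx (l : 'rV[K]_n) (B : 'M[K]_m) :
  diag_mx l *t B = \sum_a l 0 a *: (delta_mx a a *t B).
Proof.
apply: mxtens_matrixP => x y x' y'; rewrite summxE tensmxE !mxE.
under eq_bigr => a _ do rewrite mxE tensmxE mxE -mulnb natrM.
rewrite (bigD1 x) //= addrC big1 ?add0r => [|a ax]; last first.
  by rewrite [x == a]eq_sym (negbTE ax) !mul0r mulr0.
rewrite eqxx mul1r; case: (x =P x') => [<-|nx]; first by rewrite eqxx mulr1n mul1r.
by rewrite eq_sym (introF eqP nx) mulr0n !mul0r mulr0.
Qed.

Lemma mxmargA_congr (X : 'M[K]_(n * m)) :
  mxmargA X = \sum_b (\matrix_(a, k) (k == idx a b)%:R) *m X *m
                     (\matrix_(a, k) (k == idx a b)%:R)^t*.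
Proof.
apply/matrixP => a a'; rewrite summxE !mxE; apply: eq_bigr => b _.
rewrite mxE; under eq_bigr => k _ do rewrite !mxE conjC_nat.
under eq_bigr => k _ do under eq_bigr => l _ do rewrite mxE.
by under eq_bigr => k _ do rewrite sum_natr_eq_mull; rewrite sum_natr_eq_mulr.
Qed.

Lemma psdmx_mxmargA (X : 'M[K]_(n * m)) : psdmx X -> psdmx (mxmargA X).
Proof. by move=> hX; rewrite mxmargA_congr; apply: psdmx_sum => b _; apply: psdmx_congr. Qed.

End Marginals.

Section DiagonalMarginal.
Variables (K : numClosedFieldType) (n m : nat) (Pi rho : 'M[K]_(n * m)) (l : 'rV[K]_n).
Hypotheses (psdrho : psdmx rho) (psdPi : psdmx Pi) (psd1Pi : psdmx (1%:M - Pi)).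
Hypothesis margA_diag : mxmargA rho = diag_mx l.

Local Notation E a := (@deltaI K n m a a).
Local Notation G := (pform Pi rho).

Lemma eigen_ge0 a : 0 <= l 0 a.
Proof.
by have := psdmx_diag a (psdmx_mxmargA psdrho); rewrite margA_diag mxE eqxx mulr1n.
Qed.

Lemma pform_deltaI_le a : G (E a) (E a) <= \tr (Pi *m (delta_mx a a *t mxmargB rho)).
Proof.
rewrite -sum_deltaI_conj mulmx_sumr raddf_sum (bigD1 a) //= lerDl.
by apply: sumr_ge0 => c _; apply: pform_ge0.
Qed.

Lemma large_eigen_pform_le t : 0 <= t ->
  t * \sum_(a | t <= l 0 a) G (E a) (E a) <= \tr (Pi *m (mxmargA rho *t mxmargB rho)).
Proof.
move=> t_ge0; rewrite margA_diag tens_diag_mx mulmx_sumr raddf_sum /=.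
under [X in _ <= X]eq_bigr => a _ do rewrite -scalemxAr mxtraceZ.
rewrite mulr_sumr [X in _ <= X](bigID (fun a => t <= l 0 a)) /= -[X in X <= _]addr0.
apply: lerD.
  by apply: ler_sum => a le_t; apply: ler_pM; rewrite ?pform_ge0 ?pform_deltaI_le.
apply: sumr_ge0 => a _; rewrite mulr_ge0 ?eigen_ge0 //.
exact: le_trans (pform_ge0 _ _ _) (pform_deltaI_le a).
Qed.

Lemma pform_sum_deltaI_le (S : pred 'I_n) :
  G (\sum_(a | S a) E a) (\sum_(a | S a) E a) <= \sum_(a | S a) l 0 a.
Proof.
set Q := \sum_(a | S a) E a.
have le_1 : G Q Q <= pform 1%:M rho Q Q.
  by rewrite -subr_ge0 /pform -linearB -mulmxBl; apply: pform_ge0.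
apply: le_trans le_1 _; rewrite pform_suml; apply: ler_sum => a Sa.
rewrite pform_sumr (bigD1 a) //= big1 ?addr0.
  by rewrite /pform mul1mx mxtrace_deltaI_conj eqxx mul1r margA_diag mxE eqxx mulr1n.
move=> a' /andP [_ a'a].
by rewrite /pform mul1mx mxtrace_deltaI_conj eq_sym (negbTE a'a) mul0r.
Qed.

Lemma mxtrace_mul_tens_diag_ge (e : K) : (0 < n)%N -> 0 < e -> e <= \tr (Pi *m rho) ->
  e ^+ 2 / (16 * n%:R ^+ 2) <= \tr (Pi *m (mxmargA rho *t mxmargB rho)).
Proof.
move=> n_gt0 e_gt0 le_e.
have n_gt0' : 0 < n%:R :> K by rewrite ltr0n.
have n_neq0 : n%:R != 0 :> K by rewrite lt0r_neq0.
pose t := e / (4 * n%:R).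
have t_ge0 : 0 <= t by rewrite divr_ge0 ?mulr_ge0 ?ltW.
pose S : pred 'I_n := fun a => t <= l 0 a.
pose Y := \sum_(a | S a) G (E a) (E a).
pose P := \sum_(a | S a) E a; pose Q := \sum_(a | ~~ S a) E a.
have PQ : P + Q = 1%:M by rewrite -(sum_deltaI K n m) [RHS](bigID S).
have card_le (A : pred 'I_n) : (#|A| <= n)%N by rewrite -[n in (_ <= n)%N]card_ord max_card.
have GP_le : G P P <= n%:R * Y.
  apply: le_trans (pform_pinching psdPi psdrho S _) _.
  apply: ler_wpM2r; last by rewrite ler_nat card_le.
  by apply: sumr_ge0 => a _; apply: pform_ge0.
have GQ_le : G Q Q <= e / 4.
  apply: le_trans (pform_sum_deltaI_le _) _.
  apply: le_trans (_ : \sum_(a | ~~ S a) t <= _).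
    by apply: ler_sum => a Sa; apply: ltW; rewrite real_ltNge ?ger0_real ?eigen_ge0.
  rewrite sumr_const -[t *+ _]mulr_natl (@le_trans _ _ (n%:R * t)) //.
    by apply: ler_wpM2r => //; rewrite ler_nat card_le.
  by rewrite /t le_eqVlt; apply/orP; left; apply/eqP; field.
have GP_ge : e / 4 <= G P P.
  have trG : \tr (Pi *m rho) = G (P + Q) (P + Q).
    by rewrite PQ /pform trmx1 map_mx1 mulmx1 mul1mx.
  have : e <= 2 * (G P P + e / 4).
    rewrite (le_trans le_e) // trG (le_trans (pform_parallelogram psdPi psdrho P Q)) //.
    by rewrite ler_pM2l // lerD2l.
  rewrite -subr_ge0 => h; rewrite -subr_ge0.
  have -> : G P P - e / 4 = (2 * (G P P + e / 4) - e) / 2 by field.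
  by rewrite divr_ge0.
have Y_ge : e / (4 * n%:R) <= Y.
  rewrite ler_pdivrMr ?mulr_gt0 // mulrA mulrC mulrA -ler_pdivrMr //.
  exact: le_trans GP_ge GP_le.
have -> : e ^+ 2 / (16 * n%:R ^+ 2) = t * (e / (4 * n%:R)).
  by rewrite /t; field.
by apply: le_trans (large_eigen_pform_le t_ge0); apply: ler_wpM2l.
Qed.

End DiagonalMarginal.

Lemma psdmx_1_isometry_conj (K : numClosedFieldType) p q (W : 'M[K]_(p, q)) (X : 'M[K]_q) :
  W *m W^t* = 1%:M -> psdmx (1%:M - X) -> psdmx (1%:M - W *m X *m W^t*).
Proof.
move=> hW hX; have -> : 1%:M - W *m X *m W^t* = W *m (1%:M - X) *m W^t*.
  by rewrite mulmxBr mulmxBl mulmx1 hW.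
exact: psdmx_congr.
Qed.

Section Rotation.
Variables (K : numClosedFieldType) (n m : nat) (U : 'M[K]_n).
Local Notation idx a b := (@mxtens_index n m (a, b)).
Local Notation V := (U *t (1%:M : 'M[K]_m)).

Lemma rotationE (X : 'M[K]_(n * m)) x y x' y' :
  (V *m X *m V^t*) (idx x y) (idx x' y') =
  \sum_c' (\sum_c U x c * X (idx c y) (idx c' y')) * (U x' c')^*.
Proof.
rewrite mulmx_mxtensE; apply: eq_bigr => c' _.
under eq_bigr => d _ do rewrite trmxCE tensmxE [1%:M _ _]mxE rmorphM /= conjC_nat mulrA.
under eq_bigr => d _ do rewrite eq_sym.
rewrite (sum_natr_eq_mulr y'); congr (_ * _).
rewrite mulmx_mxtensE; apply: eq_bigr => c _.
under eq_bigr => d _ do rewrite tensmxE [1%:M _ _]mxE -mulrA mulrCA.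
by under eq_bigr => d _ do rewrite eq_sym; rewrite sum_natr_eq_mull.
Qed.

Lemma mxmargA_rotation (X : 'M[K]_(n * m)) :
  mxmargA (V *m X *m V^t*) = U *m mxmargA X *m U^t*.
Proof.
apply/matrixP => a a'; rewrite !mxE.
under eq_bigr => y _ do rewrite rotationE.
rewrite exchange_big; apply: eq_bigr => c' _.
rewrite trmxCE -big_distrl /=; congr (_ * _).
rewrite mxE exchange_big; apply: eq_bigr => c _.
by rewrite mxE big_distrr.
Qed.

Hypothesis unitaryU : U^t* *m U = 1%:M.

Lemma mxmargB_rotation (X : 'M[K]_(n * m)) : mxmargB (V *m X *m V^t*) = mxmargB X.
Proof.
apply/matrixP => b b'; rewrite !mxE.
have orthoU c' c : \sum_x (U x c')^* * U x c = (c' == c)%:R.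
  have := congr1 (fun M : 'M[K]_n => M c' c) unitaryU; rewrite /= !mxE => <-.
  by apply: eq_bigr => x _; rewrite !mxE.
under eq_bigr => x _ do rewrite rotationE.
under eq_bigr => x _ do under eq_bigr => c' _ do rewrite big_distrl /=.
rewrite exchange_big /=.
under eq_bigr => c' _ do rewrite exchange_big /=.
have sumU c' c : \sum_x U x c * X (idx c b) (idx c' b') * (U x c')^* =
    X (idx c b) (idx c' b') * (c' == c)%:R.
  by rewrite -orthoU big_distrr; apply: eq_bigr => x _ /=; ring.
under eq_bigr => c' _ do under eq_bigr => c _ do rewrite sumU.
rewrite exchange_big /=; apply: eq_bigr => c _.
by rewrite sum_natr_eq_mulr.
Qed.

End Rotation.

Section Swap.
Variables (K : numClosedFieldType) (n m : nat).
Local Notation idx a b := (@mxtens_index n m (a, b)).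
Local Notation idx' b a := (@mxtens_index m n (b, a)).

Definition swapmx : 'M[K]_(m * n, n * m) :=
  \matrix_(i, k) (((mxtens_unindex i).2 == (mxtens_unindex k).1) &&
                  ((mxtens_unindex i).1 == (mxtens_unindex k).2))%:R.

Lemma swapmxE a b a' b' : swapmx (idx' b a) (idx a' b') = ((a == a') && (b == b'))%:R.
Proof. by rewrite mxE !mxtens_indexK. Qed.

Lemma swapmx_conjE (X : 'M[K]_(n * m)) a b a' b' :
  (swapmx *m X *m swapmx^t*) (idx' b a) (idx' b' a') = X (idx a b) (idx a' b').
Proof.
rewrite mxE big_mxtens_index.
under eq_bigr => c _ do under eq_bigr => d _ do
  rewrite trmxCE swapmxE conjC_nat -mulnb natrM mulrA [b' == d]eq_sym.
under eq_bigr => c _ do rewrite sum_natr_eq_mulr [a' == c]eq_sym.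
rewrite sum_natr_eq_mulr mxE big_mxtens_index.
under eq_bigr => c _ do under eq_bigr => d _ do
  rewrite swapmxE -mulnb natrM -mulrA [b == d]eq_sym.
under eq_bigr => c _ do rewrite -big_distrr /= sum_natr_eq_mull [a == c]eq_sym.
by rewrite sum_natr_eq_mull.
Qed.

Lemma swapmx_unitary : swapmx *m swapmx^t* = 1%:M.
Proof.
apply: mxtens_matrixP => b a b' a'.
by rewrite -[swapmx in swapmx *m _]mulmx1 swapmx_conjE !mxE !mxtens_index_eq andbC.
Qed.

Lemma swapmx_isometry : swapmx^t* *m swapmx = 1%:M.
Proof.
apply: mxtens_matrixP => a b a' b'; rewrite mxE big_mxtens_index !mxE mxtens_index_eq.
under eq_bigr => b'' _ do under eq_bigr => a'' _ do rewrite !mxE !mxtens_indexK /= conjC_nat.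
rewrite (bigD1 b) //= [X in _ + X]big1 ?addr0 => [|b'' hb]; last first.
  by rewrite big1 // => a'' _; rewrite (negbTE hb) andbF mul0r.
rewrite (bigD1 a) //= [X in _ + X]big1 ?addr0 => [|a'' ha]; last first.
  by rewrite (negbTE ha) mul0r.
by rewrite !eqxx mul1r.
Qed.

Lemma mxmargA_swap (X : 'M[K]_(n * m)) : mxmargA (swapmx *m X *m swapmx^t*) = mxmargB X.
Proof. by apply/matrixP => b b'; rewrite !mxE; apply: eq_bigr => a _; rewrite swapmx_conjE. Qed.

Lemma mxmargB_swap (X : 'M[K]_(n * m)) : mxmargB (swapmx *m X *m swapmx^t*) = mxmargA X.
Proof. by apply/matrixP => a a'; rewrite !mxE; apply: eq_bigr => b _; rewrite swapmx_conjE. Qed.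

Lemma tensmx_swap (A : 'M[K]_n) (B : 'M[K]_m) :
  swapmx *m (A *t B) *m swapmx^t* = B *t A.
Proof. by apply: mxtens_matrixP => b a b' a'; rewrite swapmx_conjE !tensmxE mulrC. Qed.

End Swap.

Section TraceBound.
Variables (K : numClosedFieldType) (n m : nat) (Pi rho : 'M[K]_(n * m)) (e : K).
Hypotheses (psdrho : psdmx rho) (psdPi : psdmx Pi) (psd1Pi : psdmx (1%:M - Pi)).
Hypotheses (e_gt0 : 0 < e) (le_e : e <= \tr (Pi *m rho)).

Lemma mxtrace_mul_tens_marg_geA : (0 < n)%N ->
  e ^+ 2 / (16 * n%:R ^+ 2) <= \tr (Pi *m (mxmargA rho *t mxmargB rho)).
Proof.
move=> n_gt0; have [U [d [UU' U'U margA_eq _]]] := psdmx_spectral (psdmx_mxmargA psdrho).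
pose V : 'M[K]_(n * m) := U *t 1%:M.
have VV' : V *m V^t* = 1%:M by rewrite trmxC_tens trmx1 map_mx1 tensmx_mul UU' mulmx1 tens1mx.
have V'V : V^t* *m V = 1%:M by rewrite trmxC_tens trmx1 map_mx1 tensmx_mul U'U mulmx1 tens1mx.
have margA_rot : mxmargA (V *m rho *m V^t*) = U *m mxmargA rho *m U^t*.
  exact: mxmargA_rotation.
have margA_diag : mxmargA (V *m rho *m V^t*) = diag_mx d.
  by rewrite margA_rot margA_eq !mulmxA UU' mul1mx -mulmxA UU' mulmx1.
have := mxtrace_mul_tens_diag_ge (psdmx_congr V psdrho) (psdmx_congr V psdPi)
  (psdmx_1_isometry_conj VV' psd1Pi) margA_diag n_gt0 e_gt0.
rewrite mxtrace_isometry_conj // => /(_ le_e).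
rewrite margA_rot mxmargB_rotation //.
have -> : (U *m mxmargA rho *m U^t*) *t mxmargB rho =
    V *m (mxmargA rho *t mxmargB rho) *m V^t*.
  by rewrite trmxC_tens trmx1 map_mx1 !tensmx_mul mul1mx mulmx1.
by rewrite mxtrace_isometry_conj.
Qed.

End TraceBound.

Lemma mxtrace_mul_tens_marg_geB (K : numClosedFieldType) n m (Pi rho : 'M[K]_(n * m)) e :
  psdmx rho -> psdmx Pi -> psdmx (1%:M - Pi) -> 0 < e -> e <= \tr (Pi *m rho) -> (0 < m)%N ->
  e ^+ 2 / (16 * m%:R ^+ 2) <= \tr (Pi *m (mxmargA rho *t mxmargB rho)).
Proof.
move=> psdrho psdPi psd1Pi e_gt0 le_e m_gt0.
pose S := @swapmx K n m.
have := mxtrace_mul_tens_marg_geA (psdmx_congr S psdrho) (psdmx_congr S psdPi)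
  (psdmx_1_isometry_conj (swapmx_unitary K n m) psd1Pi) e_gt0.
rewrite mxtrace_isometry_conj ?swapmx_isometry // => /(_ le_e m_gt0).
by rewrite mxmargA_swap mxmargB_swap -tensmx_swap mxtrace_isometry_conj ?swapmx_isometry.
Qed.

Lemma mxtrace_mul_tens_marg_ge (K : numClosedFieldType) n m (Pi rho : 'M[K]_(n * m)) e :
  psdmx rho -> psdmx Pi -> psdmx (1%:M - Pi) -> 0 < e -> e <= \tr (Pi *m rho) ->
  (0 < n)%N -> (0 < m)%N ->
  e ^+ 2 / (16 * (minn n m)%:R ^+ 2) <= \tr (Pi *m (mxmargA rho *t mxmargB rho)).
Proof.
move=> psdrho psdPi psd1Pi e_gt0 le_e n_gt0 m_gt0.
by case: leqP => _; [apply: mxtrace_mul_tens_marg_geA | apply: mxtrace_mul_tens_marg_geB].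
Qed.

Section Representation.
Variables dA dB : nat.
Local Notation idx a b := (@mxtens_index dA dB (a, b)).

Definition toC (z : Defs.C) : R[i] := (re z +i* im z)%C.

Lemma toC_mul x y : toC (Cmul x y) = toC x * toC y.
Proof. by []. Qed.

Lemma toC_conj x : toC (Cconj x) = (toC x)^*.
Proof. by []. Qed.

Lemma toC_csum k f : toC (csum k f) = \sum_(i < k) toC (f i).
Proof.
have toC_fold l : toC (List.fold_right Cadd C0 (List.map f l)) = \sum_(i <- l) toC (f i).
  by elim: l => [|x l IH] /=; rewrite ?big_nil ?big_cons -?IH.
have seq_iota s j : List.seq s j = iota s j by elim: j s => //= j IH s; rewrite IH.
by rewrite /csum toC_fold seq_iota -(big_mkord xpredT (fun i => toC (f i))) /index_iota subn0.
Qed.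

Definition op2_mx (X : op2) : 'M[R[i]]_(dA * dB) :=
  \matrix_(i, j) toC (X (mxtens_unindex i).1 (mxtens_unindex i).2
                        (mxtens_unindex j).1 (mxtens_unindex j).2).

Lemma op2_mxE X a b a' b' : op2_mx X (idx a b) (idx a' b') = toC (X a b a' b').
Proof. by rewrite mxE !mxtens_indexK. Qed.

Lemma trmul2E X Y : toC (trmul2 dA dB X Y) = \tr (op2_mx X *m op2_mx Y).
Proof.
rewrite /trmul2 toC_csum mxtrace_mxtensE; apply: eq_bigr => a _; rewrite toC_csum.
apply: eq_bigr => b _; rewrite mulmx_mxtensE toC_csum; apply: eq_bigr => a' _.
by rewrite toC_csum; apply: eq_bigr => b' _; rewrite !op2_mxE.
Qed.

Lemma tr2E X : toC (tr2 dA dB X) = \tr (op2_mx X).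
Proof.
rewrite /tr2 toC_csum mxtrace_mxtensE; apply: eq_bigr => a _; rewrite toC_csum.
by apply: eq_bigr => b _; rewrite op2_mxE.
Qed.

Lemma op2_mx_tensor X : op2_mx (tensor (margA dA dB X) (margB dA dB X)) =
  mxmargA (op2_mx X) *t mxmargB (op2_mx X).
Proof.
apply: mxtens_matrixP => a b a' b'; rewrite op2_mxE tensmxE !mxE /tensor toC_mul /margA /margB !toC_csum.
by congr (_ * _); apply: eq_bigr => c _; rewrite op2_mxE.
Qed.

Lemma op2_mx_sub2 X : op2_mx (sub2 id2 X) = 1%:M - op2_mx X.
Proof.
apply: mxtens_matrixP => a b a' b'; rewrite op2_mxE !mxE mxtens_index_eq.
rewrite !mxtens_indexK /sub2 /id2.
have eqbE (x y : nat) : Nat.eqb x y = (x == y) by apply/Nat.eqb_spec/eqP.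
by rewrite !eqbE /=; case: ifP.
Qed.

(* The vector [v] over [dA * dB] is tested against [psd2] through its
   conjugate, as [qform2] conjugates its left argument. *)
Lemma psdmx_op2_mx X : psd2 dA dB X -> psdmx (op2_mx X).
Proof.
move=> psdX v.
pose w (a b : nat) : Defs.C :=
  match insub a, insub b with
  | Some a', Some b' => let z := (v 0 (idx a' b'))^* in mkC (complex.Re z) (complex.Im z)
  | _, _ => C0 end.
have wE (a : 'I_dA) (b : 'I_dB) : toC (w a b) = (v 0 (idx a b))^*.
  by rewrite /w !valK; case: (_ ^*).
have [im0 re_ge0] := psdX w.
have qformE : toC (qform2 dA dB X w) = sesq (op2_mx X) v v.
  rewrite sesqE big_mxtens_index /qform2 toC_csum; apply: eq_bigr => a _.
  rewrite toC_csum; apply: eq_bigr => b _; rewrite big_mxtens_index toC_csum.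
  apply: eq_bigr => a' _; rewrite toC_csum; apply: eq_bigr => b' _.
  by rewrite !toC_mul toC_conj !wE conjCK op2_mxE mulrA.
rewrite -qformE lecE /= im0 eqxx /=.
exact/RleP.
Qed.

End Representation.

Lemma state_dims_gt0 dA dB rho : is_state2 dA dB rho -> (0 < dA)%N && (0 < dB)%N.
Proof.
move=> [_ tr1]; rewrite -muln_gt0 lt0n; apply/negP => /eqP d0.
have : \tr (op2_mx dA dB rho) = 1 by rewrite -tr2E tr1.
rewrite /mxtrace big1 => [/esym/eqP|i _]; first by rewrite oner_eq0.
by move: (ltn_ord i); rewrite {2}d0.
Qed.

Lemma trmul2_tensor_marg_ge dA dB (eps : R) rho Pi :
  eps < 1 -> is_state2 dA dB rho -> povm_elem2 dA dB Pi ->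
  1 - eps <= re (trmul2 dA dB Pi rho) ->
  (1 - eps) ^+ 2 / (16 * (minn dA dB)%:R ^+ 2) <=
    re (trmul2 dA dB Pi (tensor (margA dA dB rho) (margB dA dB rho))).
Proof.
move=> lt_eps1 state [psdPi psd1Pi] le_eps.
have /andP [dA_gt0 dB_gt0] := state_dims_gt0 state; case: state => psdrho _.
have psd1Pi' : psdmx (1%:M - op2_mx dA dB Pi) by rewrite -op2_mx_sub2; apply: psdmx_op2_mx.
have e_gt0 : 0 < (1 - eps)%:C%C by rewrite ltcR subr_gt0.
have le_e : (1 - eps)%:C%C <= \tr (op2_mx dA dB Pi *m op2_mx dA dB rho).
  have := mxtrace_psdmx_mul_ge0 (psdmx_op2_mx psdPi) (psdmx_op2_mx psdrho).
  by rewrite -trmul2E !lecE /= => /andP [/eqP -> _]; rewrite eqxx.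
have := mxtrace_mul_tens_marg_ge (psdmx_op2_mx psdrho) (psdmx_op2_mx psdPi) psd1Pi' e_gt0 le_e
  dA_gt0 dB_gt0.
have -> : (1 - eps)%:C%C ^+ 2 / (16 * (minn dA dB)%:R ^+ 2) =
    ((1 - eps) ^+ 2 / (16 * (minn dA dB)%:R ^+ 2))%:C%C.
  by rewrite fmorph_div rmorphXn rmorphM /= rmorphXn !(rmorph_nat (real_complex R)).
by rewrite -op2_mx_tensor -trmul2E lecE => /andP [_].
Qed.

Local Open Scope R_scope.

Lemma ln_le x y : 0 < x -> x <= y -> ln x <= ln y.
Proof. by move=> x_gt0 [lt_xy|<-]; [left; apply: ln_increasing | right]. Qed.

(* [log2 (e^2 / 16 N^2) = 2 log2 e - 2 log2 N - 4], and [8 <= 6 log2 3]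
   since [2^8 <= 3^6]. *)
Lemma neg_log2_le (e N L : R) : 0 < e <= 1 -> 1 <= N -> e * e / (16 * (N * N)) <= L ->
  - log2 L <= 2 * log2 N + 3 * log2 (1 / e) + 6 * log2 3 - 4.
Proof.
move=> [e_gt0 e_le1] N_ge1 le_L.
have ln2_gt0 : 0 < ln 2 by have := ln_lt_2; lra.
have lnL : 2 * ln e - 4 * ln 2 - 2 * ln N <= ln L.
  have bound_gt0 : 0 < e * e / (16 * (N * N)) by apply: Rdiv_lt_0_compat; nra.
  have ln16 : ln 16 = 4 * ln 2.
    have -> : 16 = 2 ^ 4 by simpl; lra.
    by rewrite ln_pow; [simpl; lra | lra].
  have lnB : ln (e * e / (16 * (N * N))) = 2 * ln e - 4 * ln 2 - 2 * ln N.
    rewrite /Rdiv ln_mult; [|nra|by apply: Rinv_0_lt_compat; nra].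
    rewrite ln_Rinv; last by nra.
    rewrite (ln_mult e e) // (ln_mult 16) ?(ln_mult N N) ?ln16; nra.
  by rewrite -lnB; apply: ln_le.
have ln3 : 8 * ln 2 <= 6 * ln 3.
  have -> : 8 * ln 2 = ln (2 ^ 8) by rewrite ln_pow; [simpl; lra | lra].
  have -> : 6 * ln 3 = ln (3 ^ 6) by rewrite ln_pow; [simpl; lra | lra].
  by apply: ln_le; simpl; lra.
have ln_e : ln e <= 0 by rewrite -ln_1; apply: ln_le.
have ln_inv : ln (1 / e) = - ln e by rewrite /Rdiv Rmult_1_l ln_Rinv.
rewrite /log2 ln_inv.
apply: (Rmult_le_reg_r (ln 2)) => //; field_simplify; lra.
Qed.

Theorem proposition1 (dA dB : nat) (eps : R) (rho : op2) :
  0 <= eps < 1 ->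
  is_state2 dA dB rho ->
  IH_le dA dB eps rho
    (2 * log2 (INR (Nat.min dA dB)) + 3 * log2 (1 / (1 - eps)) + 6 * log2 3 - 4).
Proof.
move=> [eps_ge0 eps_lt1] state Pi povm le_eps.
set T := re (trmul2 dA dB Pi _); set N := INR (Nat.min dA dB).
have min_minn : Nat.min dA dB = minn dA dB.
  by case: leqP => cmp; [apply: Nat.min_l | apply: Nat.min_r]; apply/ssrnat.leP; rewrite // ltnW.
have N_ge1 : 1 <= N.
  by rewrite /N min_minn INRE; apply/RleP; rewrite ler1n leq_min; exact: state_dims_gt0 state.
have le_T : (1 - eps) * (1 - eps) / (16 * (N * N)) <= T.
  have lt_eps1 : (eps < 1)%R by apply/RltP.
  have le_eps' : (1 - eps <= re (trmul2 dA dB Pi rho))%R by apply/RleP.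
  have sixteen : 16%:R = 16 :> R by rewrite -INRE /=; lra.
  have := trmul2_tensor_marg_ge lt_eps1 state povm le_eps'.
  by rewrite -min_minn -[(Nat.min dA dB)%:R]INRE sixteen !expr2 => /RleP.
split; last by apply: neg_log2_le; lra.
by apply: Rlt_le_trans le_T; apply: Rdiv_lt_0_compat; nra.
Qed.
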